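(* There is an absolute constant $C$ such that for every graph $G$ with a proper vertex coloring $c:V\to[q]$, the threshold graph $G'$ constructed from $(G,q)$ as described in the context has treewidth at most $Cq^2$ (i.e., $G'$ has treewidth $O(q^2)$).
   Context: Construction of $G'$: let $G=(V,E)$, $n=|V|$, $m=|E|$, $V_c$ the nodes of color $c$ and, for distinct $c,d$, $E_{cd}$ the edges between $V_c$ and $V_d$. A parallel-paths gadget of size $h$ between nodes $x,y$ consists of $h$ new ''connection'' nodes, each adjacent exactly to $x$ and $y$. For each $c\in[q]$ add a node $x_v$ for each $v\in V_c$ and a guard node $g_c$ adjacent to all these $x_v$. For each unordered pair $\{c,d\}$ of distinct colors add a node $x_{u,v}$ for each edge $(u,v)\in E_{cd}$ and a guard node $g_{cd}$ adjacent to all of them. Assign to each $v\in V$ a distinct $low(v)\in[n]$ and set $high(v)=2n-low(v)$. For each unordered pair $\{c,d\}$ and each of its two colors, say $c$, add two validation nodes $\alpha,\beta$: $\alpha$ is joined to each $x_v$ ($v\in V_c$) by a parallel-paths gadget of size $high(v)$ and to each $x_{u,v}$ with $(u,v)\in E_{cd}$, $v\in V_c$, by a parallel-paths gadget of size $low(v)$; $\beta$ is joined to each such $x_v$ by size $low(v)$ and to each such $x_{u,v}$ by size $high(v)$ (symmetrically for color $d$). Finally add a set $B$ of $(n-q)(2nq-2n+1)+\left(m-\binom q2\right)(4n+1)$ independent nodes, each adjacent to every guard node. (Thresholds are irrelevant for treewidth.) *)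

From HB Require Import structures.
From mathcomp Require Import all_boot.
Set Implicit Arguments. Unset Strict Implicit. Unset Printing Implicit Defensive.

Definition simple_graph (V : finType) (e : rel V) : Prop :=
  symmetric e /\ irreflexive e.

Definition proper_coloring (V : finType) (e : rel V) (q : nat) (c : V -> 'I_q) : Prop :=
  forall u v, e u v -> c u != c v.

Definition acyclic (T : finType) (t : rel T) : Prop :=
  forall s : seq T, uniq s -> 3 <= size s -> ~~ cycle t s.

Definition is_tree (T : finType) (t : rel T) : Prop :=
  [/\ 0 < #|T|, symmetric t, irreflexive t,
      (forall x y, connect t x y) & acyclic t].

Definition restrict_rel (T : finType) (t : rel T) (A : {set T}) : rel T :=
  [rel x y | [&& t x y, x \in A & y \in A]].

Definition tree_decomposition (V : finType) (g : rel V)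
    (T : finType) (t : rel T) (B : T -> {set V}) : Prop :=
  [/\ is_tree t,
      (forall v, exists x, v \in B x),
      (forall u v, g u v -> exists x, (u \in B x) && (v \in B x)) &
      (forall v, let Tv := [set x | v \in B x] in
         forall x y, x \in Tv -> y \in Tv -> connect (restrict_rel t Tv) x y)].

Definition treewidth_le (V : finType) (g : rel V) (k : nat) : Prop :=
  exists (T : finType) (t : rel T) (B : T -> {set V}),
    tree_decomposition g t B /\ forall x, #|B x| <= k.+1.

(* N bounds gadget indices, K = |B|.
   AB P col b : validation node for the colour pair P and its colour col;
                b = false is alpha, b = true is beta.
   CV P col b v i : i-th connection node of the gadget between AB P col b and x_v.
   CE P col b s v i : i-th connection node of the gadget between AB P col b and
                x_s (s = {u,v} an edge, v its endpoint of colour col). *)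
Inductive node (V : finType) (q N K : nat) :=
| XV of V
| Gc of 'I_q
| XE of {set V}
| Gcd of {set 'I_q}
| AB of {set 'I_q} & 'I_q & bool
| CV of {set 'I_q} & 'I_q & bool & V & 'I_N
| CE of {set 'I_q} & 'I_q & bool & {set V} & V & 'I_N
| Bn of 'I_K.

Section NodeFin.
Variables (V : finType) (q N K : nat).
Local Notation nd := (node V q N K).
Local Notation enc_t := (V + ('I_q + ({set V} + ({set 'I_q} +
  ({set 'I_q} * 'I_q * bool + ({set 'I_q} * 'I_q * bool * V * 'I_N +
  ({set 'I_q} * 'I_q * bool * {set V} * V * 'I_N + 'I_K)))))))%type.

Definition node_enc (x : nd) : enc_t :=
  match x with
  | XV v => inl v
  | Gc a => inr (inl a)
  | XE s => inr (inr (inl s))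
  | Gcd P => inr (inr (inr (inl P)))
  | AB P a b => inr (inr (inr (inr (inl (P, a, b)))))
  | CV P a b v i => inr (inr (inr (inr (inr (inl (P, a, b, v, i))))))
  | CE P a b s v i => inr (inr (inr (inr (inr (inr (inl (P, a, b, s, v, i)))))))
  | Bn i => inr (inr (inr (inr (inr (inr (inr i))))))
  end.

Definition node_dec (y : enc_t) : nd :=
  match y with
  | inl v => XV _ _ _ v
  | inr (inl a) => Gc _ _ _ a
  | inr (inr (inl s)) => XE _ _ _ s
  | inr (inr (inr (inl P))) => Gcd _ _ _ P
  | inr (inr (inr (inr (inl (P, a, b))))) => AB _ _ _ P a b
  | inr (inr (inr (inr (inr (inl (P, a, b, v, i)))))) => CV _ P a b v i
  | inr (inr (inr (inr (inr (inr (inl (P, a, b, s, v, i))))))) => CE _ P a b s v i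
  | inr (inr (inr (inr (inr (inr (inr i)))))) => Bn _ _ _ i
  end.

Lemma node_encK : cancel node_enc node_dec.
Proof. by case. Qed.

HB.instance Definition _ := Finite.copy nd (can_type node_encK).
End NodeFin.

Section Construction.
Variables (V : finType) (e : rel V) (q : nat) (c : V -> 'I_q) (low : V -> nat).

Definition n := #|V|.
Definition is_edge (s : {set V}) : bool :=
  [exists u, exists v, e u v && (s == [set u; v])].
Definition m := #|[set s : {set V} | is_edge s]|.
Definition high (v : V) : nat := 2 * n - low v.

(* |B| = (n-q)(2nq-2n+1) + (m - binom(q,2))(4n+1)  (truncated subtraction) *)
Definition Bsize : nat :=
  (n - q) * (2 * n * q - 2 * n + 1) + (m - 'C(q, 2)) * (4 * n + 1).

Definition Nb := (2 * n).+1.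
Definition rnode := node V q Nb Bsize.

Definition is_pair (P : {set 'I_q}) : bool := #|P| == 2.
Definition edge_in (P : {set 'I_q}) (s : {set V}) : bool :=
  is_edge s && (c @: s == P).

(* gadget size between AB P col b and x_v / x_s (with endpoint v of colour col) *)
Definition size_V (b : bool) (v : V) : nat := if b then low v else high v.
Definition size_E (b : bool) (v : V) : nat := if b then high v else low v.

Definition valid (x : rnode) : bool :=
  match x with
  | XV _ => true
  | Gc _ => true
  | XE s => is_edge s
  | Gcd P => is_pair P
  | AB P a _ => is_pair P && (a \in P)
  | CV P a b v i => [&& is_pair P, a \in P, c v == a & i < size_V b v]
  | CE P a b s v i =>
      [&& is_pair P, a \in P, edge_in P s, v \in s, c v == a & i < size_E b v]
  | Bn _ => true
  end.

Definition adj0 (x y : rnode) : bool :=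
  match x, y with
  | XV v, Gc a => c v == a
  | XE s, Gcd P => c @: s == P
  | CV P a b v _, XV w => v == w
  | CV P a b _ _, AB P' a' b' => [&& P == P', a == a' & b == b']
  | CE P a b s _ _, XE s' => s == s'
  | CE P a b _ _ _, AB P' a' b' => [&& P == P', a == a' & b == b']
  | Bn _, Gc _ => true
  | Bn _, Gcd _ => true
  | _, _ => false
  end.

Definition Gp_vertex := {x : rnode | valid x}.
Definition Gp_adj : rel Gp_vertex :=
  fun x y => adj0 (val x) (val y) || adj0 (val y) (val x).

End Construction.

From HB Require Import structures.
From mathcomp Require Import all_boot.
Set Implicit Arguments. Unset Strict Implicit. Unset Printing Implicit Defensive.

(* Call the guard and validation nodes hubs; there are O(q^2) of them.  Every
   other edge of G' joins a connection node to the node x_v or x_{u,v} its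
   gadget hangs on, so removing the hubs leaves a star forest.  A star forest
   has a tree decomposition of depth 2 with bags {x, centre of x}; adding all
   hubs to every bag gives width at most #hubs + 1. *)

Lemma connect_via (T : finType) (e : rel T) (A : pred T) (z : T) :
  connect_sym e -> {in A, forall x, connect e x z} -> {in A &, forall x y, connect e x y}.
Proof.
by move=> e_sym to_z x y xA yA; rewrite (connect_trans (to_z x xA)) // e_sym to_z.
Qed.

Lemma restrict_rel_sym (T : finType) (r : rel T) (A : {set T}) :
  symmetric r -> symmetric (restrict_rel r A).
Proof. by move=> r_sym x y; rewrite /restrict_rel /= r_sym (andbC (x \in A)). Qed.

Section ParentTree.
Variables (T : finType) (p : T -> T).

Definition parent_rel : rel T := fun a b => (a != b) && ((p a == b) || (p b == a)).

Lemma parent_rel_sym : symmetric parent_rel.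
Proof. by move=> a b; rewrite /parent_rel eq_sym orbC. Qed.

Lemma parent_rel_irr : irreflexive parent_rel.
Proof. by move=> a; rewrite /parent_rel eqxx. Qed.

Lemma connect_restrict_parent (A : {set T}) t :
  t \in A -> p t \in A -> connect (restrict_rel parent_rel A) t (p t).
Proof.
move=> tA ptA; have [<-|t_neq] := eqVneq t (p t); first exact: connect0.
by apply: connect1; rewrite /restrict_rel /= /parent_rel t_neq eqxx tA ptA.
Qed.

Lemma connect_parent t : connect parent_rel t (p t).
Proof.
have [<-|t_neq] := eqVneq t (p t); first exact: connect0.
by apply: connect1; rewrite /parent_rel t_neq eqxx.
Qed.

Variable d : T -> nat.
Hypothesis parent_rank : forall a, p a != a -> d (p a) < d a.

(* On a cycle, both neighbours of a vertex of maximal rank must be its parent. *)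
Lemma parent_rel_acyclic : acyclic parent_rel.
Proof.
move=> s s_uniq s_size; apply/negP => s_cycle.
have [x xs x_max] : exists2 x, x \in s & {in s, forall y, d y <= d x}.
  case: s s_size {s_uniq s_cycle} => [|a s] // _.
  by case: (@arg_maxnP _ a (mem (a :: s)) d (mem_head a s)) => x; exists x.
have x_parent w : w \in s -> parent_rel x w -> p x = w.
  move=> ws /andP [xw /orP [/eqP // | /eqP pw]].
  by move: (@parent_rank w); rewrite pw xw ltnNge x_max // => /(_ isT).
have rs_uniq : uniq (rot (index x s) s) by rewrite rot_uniq.
have rs_cycle : cycle parent_rel (rot (index x s) s) by rewrite rot_cycle.
have rs_size : 3 <= size (rot (index x s) s) by rewrite size_rot.
have rs_mem : rot (index x s) s =i s by apply: mem_rot.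
move: rs_uniq rs_cycle rs_size rs_mem; rewrite rot_index {xs}//.
case: (drop _ _ ++ _) => [|y [|z r]] // rs_uniq rs_cycle _ rs_mem.
move: rs_cycle; rewrite /cycle rcons_path => /andP [/andP [xy _] /= lx].
have y_notin : y \notin z :: r by case/and3P: rs_uniq.
have px_y : p x = y by rewrite (x_parent y) // -rs_mem !inE eqxx orbT.
have px_last : p x = last z r.
  by apply: x_parent; rewrite 1?parent_rel_sym // -rs_mem; do 2 apply: mem_behead; apply: mem_last.
by move: y_notin; rewrite -px_y px_last mem_last.
Qed.

Lemma parent_rel_tree (r : T) : (forall x, connect parent_rel x r) -> is_tree parent_rel.
Proof.
move=> to_r; split; [|exact: parent_rel_sym|exact: parent_rel_irr| |exact: parent_rel_acyclic].
  by apply/card_gt0P; exists r.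
by move=> x y; apply: (@connect_via _ _ predT r) => //; apply: sym_connect_sym parent_rel_sym.
Qed.

End ParentTree.

Lemma treewidth_leW (V : finType) (g : rel V) (k k' : nat) :
  k <= k' -> treewidth_le g k -> treewidth_le g k'.
Proof.
move=> le_k [T [t [B [dec B_small]]]]; exists T, t, B; split=> // x.
exact: leq_trans (B_small x) _.
Qed.

Lemma treewidth_le_card (V : finType) (g : rel V) : treewidth_le g #|V|.-1.
Proof.
exists unit, (fun _ _ => false), (fun _ => setT); split; last first.
  by move=> _; rewrite cardsT leqSpred.
split=> [|v|u v _|v Tv [] [] _ _]; try by [exists tt; rewrite !inE | exact: connect0].
split=> //; [by rewrite card_unit | by move=> [] []; exact: connect0 |].
by move=> [|x s] // _ _; rewrite /cycle rcons_path andbF.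
Qed.

Section ApexStarForest.
Variables (V : finType) (g : rel V) (H : {set V}) (f : V -> V).
Hypothesis fK : forall x, f (f x) = f x.
Hypothesis g_cover : forall x y, g x y -> [|| x \in H, y \in H, f x == y | f y == x].

Definition star_parent (t : option V) : option V :=
  if t is Some x then (if f x == x then None else Some (f x)) else None.

Definition star_bag (t : option V) : {set V} :=
  if t is Some x then H :|: [set x; f x] else H.

Lemma star_parentK t : star_parent (star_parent t) = None.
Proof. by case: t => [x|] //=; case: ifP => //= _; rewrite (fK x) eqxx. Qed.

Lemma star_tree : is_tree (parent_rel star_parent).
Proof.
apply: (@parent_rel_tree _ _ (fun t => if t is Some x then (f x != x).+1 else 0) _ None).
  by case=> [x|] //=; case: ifP => //= _ _; rewrite fK eqxx.
move=> t; apply: connect_trans (connect_parent _ t) _.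
by rewrite -(star_parentK t) connect_parent.
Qed.

Lemma star_bag_connected v :
  let Tv := [set t | v \in star_bag t] in
  forall t u, t \in Tv -> u \in Tv -> connect (restrict_rel (parent_rel star_parent) Tv) t u.
Proof.
move=> Tv; apply: (connect_via (z := if v \in H then None else Some v)).
  exact/sym_connect_sym/restrict_rel_sym/parent_rel_sym.
have [vH|vH] := boolP (v \in H) => t.
  have Tv_all w : w \in Tv by rewrite inE; case: w => [w|] //=; rewrite inE vH.
  rewrite -(star_parentK t) (connect_trans (connect_restrict_parent (Tv_all _) (Tv_all _))) //.
  exact: connect_restrict_parent.
case: t => [x|]; rewrite inE /= ?inE (negbTE vH) //= => /orP [/eqP -> | /eqP fx].
  exact: connect0.
have [-> | xv] := eqVneq x v; first exact: connect0.
have parent_x : star_parent (Some x) = Some v by rewrite /= -fx eq_sym (negbTE xv).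
rewrite -parent_x connect_restrict_parent // ?parent_x !inE ?fx eqxx ?orbT //.
Qed.

Lemma star_tree_decomposition : tree_decomposition g (parent_rel star_parent) star_bag.
Proof.
split; [exact: star_tree | | | exact: star_bag_connected].
  by move=> v; exists (Some v); rewrite !inE eqxx orbT.
move=> u v /g_cover /or4P [uH|vH|/eqP fu|/eqP fv].
- by exists (Some v); rewrite !inE uH eqxx !orbT.
- by exists (Some u); rewrite !inE vH eqxx !orbT.
- by exists (Some u); rewrite !inE fu !eqxx !orbT.
- by exists (Some v); rewrite !inE fv !eqxx !orbT.
Qed.

Lemma card_star_bag t : #|star_bag t| <= #|H| + 2.
Proof.
case: t => [x|] /=; last exact: leq_addr.
by rewrite (leq_trans (leq_card_setU _ _)) // leq_add2l cards2; case: (_ != _).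
Qed.

Theorem treewidth_le_apex_star_forest : treewidth_le g #|H|.+1.
Proof.
exists (option V), (parent_rel star_parent), star_bag; split.
  exact: star_tree_decomposition.
by move=> t; rewrite (leq_trans (card_star_bag t)) ?addn2.
Qed.

End ApexStarForest.

Section Nodes.
Variables (V : finType) (q N K : nat).
Implicit Types x : node V q N K.

Definition is_hub x : bool :=
  match x with Gc _ | Gcd _ | AB _ _ _ => true | _ => false end.

Definition center_node x : node V q N K :=
  match x with
  | CV _ _ _ v _ => XV _ _ _ v
  | CE _ _ _ s _ _ => XE _ _ _ s
  | _ => x
  end.

Lemma center_nodeK x : center_node (center_node x) = center_node x.
Proof. by case: x. Qed.

Definition hub_code (k : 'I_q * 'I_q * option (option bool)) : node V q N K :=
  let: (a, b, kind) := k in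
  match kind with
  | None => Gc _ _ _ a
  | Some None => Gcd _ _ _ [set a; b]
  | Some (Some t) => AB _ _ _ [set a; b] a t
  end.

End Nodes.

Lemma cards2_mem (T : finType) (A : {set T}) (a : T) :
  #|A| == 2 -> a \in A -> exists b, A = [set a; b].
Proof.
case/cards2P=> [x [y [_ ->]]] /set2P [->|->]; first by exists y.
by exists x; rewrite setUC.
Qed.

Section GadgetGraph.
Variables (V : finType) (e : rel V) (q : nat) (c : V -> 'I_q) (low : V -> nat).
Local Notation vertex := (Gp_vertex e c low).

Lemma valid_center_node (x : rnode e q) : valid c low x -> valid c low (center_node x).
Proof. by case: x => //= P a b s v i /and5P [_ _ /andP []]. Qed.

Definition center (x : vertex) : vertex := Sub _ (valid_center_node (valP x)).

Definition hubs : {set vertex} := [set x | is_hub (val x)].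

Lemma centerK (x : vertex) : center (center x) = center x.
Proof. by apply: val_inj; apply: center_nodeK. Qed.

Lemma adj0_cover (x y : rnode e q) :
  adj0 c x y -> [|| is_hub x, is_hub y, center_node x == y | center_node y == x].
Proof. by case: x; case: y => //= > /eqP ->; rewrite eqxx. Qed.

Lemma Gp_adj_cover (x y : vertex) :
  Gp_adj x y -> [|| x \in hubs, y \in hubs, center x == y | center y == x].
Proof.
rewrite !inE -!val_eqE /= => /orP [] /adj0_cover; first by [].
by case/or4P=> ->; rewrite ?orbT.
Qed.

Lemma hub_in_code (x : vertex) : x \in hubs -> val x \in codom (@hub_code V q _ _).
Proof.
rewrite inE; case: x => [[] //= P] => [_ _|P2 _|a t /andP [P2 aP] _]; apply/codomP.
- by exists (P, P, None).
- by case/cards2P: P2 => a [b [_ ->]]; exists (a, b, Some None).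
- by have [b ->] := cards2_mem P2 aP; exists (a, b, Some (Some t)).
Qed.

Lemma card_hubs : #|hubs| <= 4 * q ^ 2.
Proof.
rewrite -(card_imset _ val_inj).
apply: leq_trans (subset_leq_card (_ : _ \subset codom (@hub_code V q _ _))) _.
  by apply/subsetP => _ /imsetP [x xH ->]; apply: hub_in_code.
by rewrite (leq_trans (leq_image_card _ _)) // !card_prod !card_option card_bool card_ord mulnC.
Qed.

End GadgetGraph.

Lemma card_Gp_vertex0 (V : finType) (e : rel V) (c : V -> 'I_0) (low : V -> nat) :
  #|{: Gp_vertex e c low}| = 0.
Proof.
have noV (v : V) : False by case: (c v).
have n0 : n V = 0 by apply: eq_card0 => v; case: (noV v).
have m0 : m e = 0 by apply: eq_card0 => s; rewrite inE; apply/existsP => -[u _]; case: (noV u).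
have no_pair (P : {set 'I_0}) : is_pair P = false.
  by have := max_card P; rewrite card_ord leqn0 /is_pair => /eqP ->.
apply: eq_card0 => -[x x_valid]; exfalso; move: x_valid.
case: x => [v|[]|s|P|P|P a b v|P a b s v|[i]] //=; try by case: (noV v).
- by case/existsP=> u _; case: (noV u).
- by rewrite no_pair.
- by rewrite no_pair.
- by rewrite /Bsize n0 m0.
Qed.

Theorem lemma3 :
  exists C : nat,
    forall (V : finType) (e : rel V) (q : nat) (c : V -> 'I_q) (low : V -> nat),
      simple_graph e ->
      proper_coloring e c ->
      injective low ->
      (forall v, 1 <= low v <= #|V|) ->
      treewidth_le (@Gp_adj V e q c low) (C * q ^ 2).
Proof.
(* The bound holds for the construction over any graph and any [low]. *)
exists 5 => V e q c low _ _ _ _.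
case: q c => [|q] c.
  by apply: treewidth_leW (treewidth_le_card _); rewrite card_Gp_vertex0.
apply: treewidth_leW (treewidth_le_apex_star_forest (@centerK _ _ _ c low)
                                                     (@Gp_adj_cover _ _ _ c low)).
by rewrite (mulSn 4) addnC -addn1 leq_add ?card_hubs ?expn_gt0.
Qed.
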